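(* In the multi-parameter setting described in the context, for every $\theta\in\Theta$, $$(C_\Upsilon)_{kl}=\sum_{i:p_i>0}\frac{1}{p_i}\frac{\partial p_i}{\partial\theta^k}\frac{\partial p_i}{\partial\theta^l}+4\,\mathrm{Re}\sum_{i<j}(p_i+p_j)\langle w_i^{(k)}|w_j\rangle\langle w_j|w_i^{(l)}\rangle+4\sum_{i:p_i>0}p_i\langle w_i^{(k)}|w_i\rangle\langle w_i|w_i^{(l)}\rangle,$$ where $|w_i^{(k)}\rangle=\partial|w_i\rangle/\partial\theta^k$.
   Context: Let $\Theta\subseteq\mathbb{R}^p$ be open and $D\ge1$. For $\theta\in\Theta$ let $\Phi_\theta$ be a quantum channel on $D\times D$ complex matrices and $\rho_0=|\psi_0\rangle\langle\psi_0|$ a fixed pure input state. Canonical Kraus operators are $D\times D$ matrices $\Upsilon_1(\theta),\dots,\Upsilon_D(\theta)$, differentiable in $\theta$, with $\sum_k\Upsilon_k^\dagger\Upsilon_k=\mathbb{I}$, $\Phi_\theta(\rho)=\sum_k\Upsilon_k\rho\Upsilon_k^\dagger$, and $\mathrm{tr}\{\Upsilon_k\rho_0\Upsilon_j^\dagger\}=\delta_{jk}p_k(\theta)$. Write $\Upsilon_k(\theta)|\psi_0\rangle=\sqrt{p_k(\theta)}|w_k(\theta)\rangle$ with $\{|w_k(\theta)\rangle\}$ an orthonormal basis of $\mathbb{C}^D$ differentiable in $\theta$. Each $p_k$ is assumed either identically zero or strictly positive on $\Theta$. The multi-parameter Sarovar–Milburn bound is the $p\times p$ matrix $(C_\Upsilon)_{kl}=4\sum_i\mathrm{Re}\,\mathrm{tr}\{\frac{\partial\Upsilon_i}{\partial\theta^k}\rho_0(\frac{\partial\Upsilon_i}{\partial\theta^l})^\dagger\}$.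 *)

From HB Require Import structures.
From mathcomp Require Import all_boot all_order all_algebra.
From mathcomp Require Import all_classical all_reals all_analysis.
From mathcomp Require Import complex.
Set Implicit Arguments.
Unset Strict Implicit.
Unset Printing Implicit Defensive.
Import Order.TTheory GRing.Theory Num.Theory.
Import numFieldNormedType.Exports.
Local Open Scope ring_scope.
Local Open Scope complex_scope.

(* Conventions: parameters theta live in 'rV[R]_p (R a realType); complex
   numbers are R[i] (mathcomp-real-closed); complex-valued functions are
   differentiated componentwise (real and imaginary parts). *)

Section Defs.
Variables (R : realType) (p : nat).

Definition ebase (k : 'I_p) : 'rV[R]_p := delta_mx 0 k.

Definition rpartial (k : 'I_p) (f : 'rV[R]_p -> R) (th : 'rV[R]_p) : R :=
  'D_(ebase k) f th.

Definition cpartial (k : 'I_p) (f : 'rV[R]_p -> R[i]) (th : 'rV[R]_p) : R[i] :=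
  rpartial k (fun x => complex.Re (f x)) th +i* rpartial k (fun x => complex.Im (f x)) th.

Definition mxpartial m n (k : 'I_p) (F : 'rV[R]_p -> 'M[R[i]]_(m, n))
  (th : 'rV[R]_p) : 'M[R[i]]_(m, n) :=
  \matrix_(a, b) cpartial k (fun x => F x a b) th.

Definition mxdifferentiable m n (F : 'rV[R]_p -> 'M[R[i]]_(m, n))
  (th : 'rV[R]_p) : Prop :=
  forall a b, differentiable (fun x => complex.Re (F x a b)) th /\
              differentiable (fun x => complex.Im (F x a b)) th.
End Defs.

Definition adjmx (R : rcfType) m n (A : 'M[R[i]]_(m, n)) : 'M[R[i]]_(n, m) :=
  (map_mx (@conjc R) A)^T.

Definition cinner (R : rcfType) n (u v : 'cV[R[i]]_n) : R[i] :=
  \sum_(a < n) (u a 0)^* * v a 0.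

From HB Require Import structures.
From mathcomp Require Import all_boot all_order all_algebra.
From mathcomp Require Import all_classical all_reals all_analysis.
From mathcomp Require Import complex.
From mathcomp Require Import ring lra.
Set Implicit Arguments.
Unset Strict Implicit.
Unset Printing Implicit Defensive.
Import Order.TTheory GRing.Theory Num.Theory.
Import numFieldNormedType.Exports.
Local Open Scope ring_scope.
Local Open Scope complex_scope.

(* Write U_i psi0 = s_i w_i with s_i = sqrt p_i.  Near theta, s_i agrees with
   Re <w_i | U_i psi0>, so it is differentiable and d(U_i psi0) = ds_i w_i + s_i dw_i,
   while tr (d_k U_i rho0 (d_l U_i)^+) = <d_l U_i psi0 | d_k U_i psi0>.  Differentiating
   <w_i|w_j> = delta_ij gives <dw_i|w_j> + <w_i|dw_j> = 0: the cross terms have zero real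
   part, and the kernel Z_ij = <d_k w_i|w_j><w_j|d_l w_i> satisfies Z_ji = conj Z_ij.
   Expanding <d_l w_i|d_k w_i> in the basis {w_j} and folding the symmetric kernel
   Re Z_ij gives the diagonal and i < j sums.  Finally 4 d_k s_i d_l s_i equals
   d_k p_i d_l p_i / p_i when p_i > 0, and ds_i = 0 when p_i vanishes identically. *)

(* [cinner] conjugates with [Num.conj], written [^*%R]: in [complex_scope] a bare
   [^*] is [conjc]. *)
Section ComplexParts.
Variable R : rcfType.
Implicit Types (a : R) (z : R[i]).

Lemma ReD z1 z2 : complex.Re (z1 + z2) = complex.Re z1 + complex.Re z2.
Proof. by case: z1 => ? ?; case: z2. Qed.

Lemma ImD z1 z2 : complex.Im (z1 + z2) = complex.Im z1 + complex.Im z2.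
Proof. by case: z1 => ? ?; case: z2. Qed.

Lemma ReM z1 z2 :
  complex.Re (z1 * z2) = complex.Re z1 * complex.Re z2 - complex.Im z1 * complex.Im z2.
Proof. by case: z1 => ? ?; case: z2. Qed.

Lemma ImM z1 z2 :
  complex.Im (z1 * z2) = complex.Re z1 * complex.Im z2 + complex.Im z1 * complex.Re z2.
Proof. by case: z1 => ? ?; case: z2. Qed.

Lemma ReJ z : complex.Re z^*%R = complex.Re z. Proof. by case: z. Qed.

Lemma ImJ z : complex.Im z^*%R = - complex.Im z. Proof. by case: z. Qed.

Lemma Re_sum I r (P : pred I) (F : I -> R[i]) :
  complex.Re (\sum_(i <- r | P i) F i) = \sum_(i <- r | P i) complex.Re (F i).
Proof. exact: (big_morph _ ReD (erefl _)). Qed.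

Lemma Im_sum I r (P : pred I) (F : I -> R[i]) :
  complex.Im (\sum_(i <- r | P i) F i) = \sum_(i <- r | P i) complex.Im (F i).
Proof. exact: (big_morph _ ImD (erefl _)). Qed.

Lemma Re_realM a z : complex.Re (a%:C * z) = a * complex.Re z.
Proof. by case: z => ? ? /=; rewrite mul0r subr0. Qed.

Lemma Re_eq0_skew z : z^*%R + z = 0 -> complex.Re z = 0.
Proof. by case: z => ? ? [] /=; lra. Qed.

Lemma complex_ext z1 z2 :
  complex.Re z1 = complex.Re z2 -> complex.Im z1 = complex.Im z2 -> z1 = z2.
Proof. by case: z1 => ? ?; case: z2 => ? ? /= -> ->. Qed.

Lemma conjcM z1 z2 : (z1 * z2)^*%R = z1^*%R * z2^*%R.
Proof. exact: rmorphM. Qed.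

Lemma conj_real_complex a : a%:C^*%R = a%:C.
Proof. exact: conjc_real. Qed.

Lemma conjc_fixed_real z : z^*%R = z -> (complex.Re z)%:C = z.
Proof. by case: z => a b [] /= Nb; apply: complex_ext => //=; lra. Qed.

End ComplexParts.

Section InnerProduct.
Variable R : rcfType.
Implicit Types (x : R[i]).

Lemma cinner_adjmx n (u v : 'cV[R[i]]_n) : cinner u v = (adjmx u *m v) 0 0.
Proof. by rewrite mxE; apply: eq_bigr => a _; rewrite !mxE. Qed.

Lemma cinnerDl n (u1 u2 v : 'cV[R[i]]_n) :
  cinner (u1 + u2) v = cinner u1 v + cinner u2 v.
Proof. by rewrite /cinner -big_split; apply: eq_bigr => a _; rewrite mxE rmorphD mulrDl. Qed.

Lemma cinnerDr n (u v1 v2 : 'cV[R[i]]_n) :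
  cinner u (v1 + v2) = cinner u v1 + cinner u v2.
Proof. by rewrite /cinner -big_split; apply: eq_bigr => a _; rewrite mxE mulrDr. Qed.

Lemma cinnerZl n (u v : 'cV[R[i]]_n) x : cinner (x *: u) v = x^*%R * cinner u v.
Proof. by rewrite /cinner mulr_sumr; apply: eq_bigr => a _; rewrite mxE rmorphM mulrA. Qed.

Lemma cinnerZr n (u v : 'cV[R[i]]_n) x : cinner u (x *: v) = x * cinner u v.
Proof. by rewrite /cinner mulr_sumr; apply: eq_bigr => a _; rewrite mxE mulrCA. Qed.

Lemma conj_cinner n (u v : 'cV[R[i]]_n) : (cinner u v)^*%R = cinner v u.
Proof.
rewrite /cinner rmorph_sum; apply: eq_bigr => a _.
rewrite rmorphM mulrC; congr (_ * _); exact: conjcK.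
Qed.

Lemma adjmxM m n q (A : 'M[R[i]]_(m, n)) (B : 'M[R[i]]_(n, q)) :
  adjmx (A *m B) = adjmx B *m adjmx A.
Proof. by rewrite /adjmx map_mxM trmx_mul. Qed.

Lemma mxtrace_rank1 n (A B : 'M[R[i]]_n) (psi : 'cV[R[i]]_n) :
  \tr (A *m (psi *m adjmx psi) *m adjmx B) = cinner (B *m psi) (A *m psi).
Proof.
by rewrite mulmxA -mulmxA -adjmxM mxtrace_mulC /mxtrace big_ord1 cinner_adjmx.
Qed.

Lemma cinner_parseval n (w : 'I_n -> 'cV[R[i]]_n) (u v : 'cV[R[i]]_n) :
  (forall j k, cinner (w j) (w k) = (j == k)%:R) ->
  cinner u v = \sum_(j < n) cinner u (w j) * cinner (w j) v.
Proof.
move=> w_on; pose M : 'M[R[i]]_n := \matrix_(a, j) w j a 0.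
have uM j : (adjmx u *m M) 0 j = cinner u (w j).
  by rewrite mxE; apply: eq_bigr => a _; rewrite !mxE.
have Mv j : (adjmx M *m v) j 0 = cinner (w j) v.
  by rewrite mxE; apply: eq_bigr => a _; rewrite !mxE.
have MMadj : M *m adjmx M = 1%:M.
  apply: mulmx1C; apply/matrixP => j k; rewrite !mxE -w_on.
  by apply: eq_bigr => a _; rewrite !mxE.
rewrite cinner_adjmx (_ : adjmx u *m v = (adjmx u *m M) *m (adjmx M *m v)).
  by rewrite mxE; apply: eq_bigr => j _; rewrite uM Mv.
by rewrite mulmxA -(mulmxA _ M) MMadj mulmx1.
Qed.

Lemma Re_cinner_tangent n (w x y : 'cV[R[i]]_n) (a b s : R) :
  cinner w w = 1 -> complex.Re (cinner w x) = 0 -> complex.Re (cinner y w) = 0 ->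
  complex.Re (cinner (b%:C *: w + s%:C *: y) (a%:C *: w + s%:C *: x))
  = a * b + s ^+ 2 * complex.Re (cinner y x).
Proof.
move=> w1 wx yw.
rewrite !cinnerDl !cinnerDr !cinnerZl !cinnerZr !conj_real_complex w1 mulr1 !ReD.
by rewrite !mulrA -!rmorphM !Re_realM wx yw /=; ring.
Qed.

End InnerProduct.

Section ComplexDerive.
Variables (R : realType) (V : normedModType R) (x v : V).
Implicit Types (F G : V -> R[i]) (f : V -> R).

(* [R[i]] carries no normed [R]-module structure here, so complex functions are
   differentiated through their real and imaginary parts. *)
Definition is_cderive F (dF : R[i]) : Prop :=
  is_derive x v (fun y => complex.Re (F y)) (complex.Re dF) /\
  is_derive x v (fun y => complex.Im (F y)) (complex.Im dF).

Lemma is_derive_ext f g (df : R) : f =1 g -> is_derive x v f df -> is_derive x v g df.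
Proof. by move=> /funext ->. Qed.

Lemma cderive_unique F dF dG : is_cderive F dF -> is_cderive F dG -> dF = dG.
Proof.
move=> [RF IF] [RG IG]; apply: complex_ext.
  by rewrite -(@derive_val _ _ _ _ _ _ _ RF) -(@derive_val _ _ _ _ _ _ _ RG).
by rewrite -(@derive_val _ _ _ _ _ _ _ IF) -(@derive_val _ _ _ _ _ _ _ IG).
Qed.

Lemma near_eq_is_cderive F G dF :
  (\forall y \near x, F y = G y) -> is_cderive F dF -> is_cderive G dF.
Proof.
move=> FG [RF IF]; split.
  by apply: near_eq_is_derive RF; apply: filterS FG => y ->.
by apply: near_eq_is_derive IF; apply: filterS FG => y ->.
Qed.

Lemma is_cderive_cst (c : R[i]) : is_cderive (fun=> c) 0.
Proof. by split; exact: is_derive_cst. Qed.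

Lemma is_cderive_real f df : is_derive x v f df -> is_cderive (fun y => (f y)%:C) df%:C.
Proof. by split => //; exact: is_derive_cst. Qed.

Lemma is_cderiveM F G dF dG : is_cderive F dF -> is_cderive G dG ->
  is_cderive (fun y => F y * G y) (dF * G x + F x * dG).
Proof.
move=> [RF IF] [RG IG]; split.
  apply: is_derive_ext (is_derive_eq (is_deriveB (is_deriveM RF RG) (is_deriveM IF IG)) _).
    by move=> y; rewrite ReM.
  by rewrite ReD !ReM /= /GRing.scale /=; ring.
apply: is_derive_ext (is_derive_eq (is_deriveD (is_deriveM RF IG) (is_deriveM IF RG)) _).
  by move=> y; rewrite ImM.
by rewrite ImD !ImM /= /GRing.scale /=; ring.
Qed.

Lemma is_cderiveJ F dF : is_cderive F dF -> is_cderive (fun y => (F y)^*%R) dF^*%R.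
Proof.
move=> [RF IF]; split; first by rewrite ReJ; apply: is_derive_ext RF => y; rewrite ReJ.
by rewrite ImJ; apply: is_derive_ext (is_deriveN IF) => y; rewrite ImJ.
Qed.

Lemma is_cderive_sum n (F : 'I_n -> V -> R[i]) (dF : 'I_n -> R[i]) :
  (forall i, is_cderive (F i) (dF i)) ->
  is_cderive (fun y => \sum_(i < n) F i y) (\sum_(i < n) dF i).
Proof.
move=> FdF; split.
  rewrite Re_sum; apply: is_derive_ext (is_derive_sum (fun i => (FdF i).1)) => y.
  by rewrite Re_sum fct_sumE.
rewrite Im_sum; apply: is_derive_ext (is_derive_sum (fun i => (FdF i).2)) => y.
by rewrite Im_sum fct_sumE.
Qed.

End ComplexDerive.

Section MatrixDerive.
Variables (R : realType) (V : normedModType R) (x v : V).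

Definition is_mxderive m n (F : V -> 'M[R[i]]_(m, n)) (dF : 'M[R[i]]_(m, n)) :=
  forall a b, is_cderive x v (fun y => F y a b) (dF a b).

Lemma mxderive_unique m n (F : V -> 'M[R[i]]_(m, n)) dF dG :
  is_mxderive F dF -> is_mxderive F dG -> dF = dG.
Proof. by move=> FdF FdG; apply/matrixP => a b; exact: cderive_unique (FdF a b) (FdG a b). Qed.

Lemma near_eq_is_mxderive m n (F G : V -> 'M[R[i]]_(m, n)) dF :
  (\forall y \near x, F y = G y) -> is_mxderive F dF -> is_mxderive G dF.
Proof.
by move=> FG FdF a b; apply: near_eq_is_cderive (FdF a b); apply: filterS FG => y ->.
Qed.

Lemma is_mxderive_cst m n (A : 'M[R[i]]_(m, n)) : is_mxderive (fun=> A) 0.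
Proof. by move=> a b; rewrite mxE; exact: is_cderive_cst. Qed.

Lemma is_mxderiveM m n q (F : V -> 'M[R[i]]_(m, n)) (G : V -> 'M[R[i]]_(n, q)) dF dG :
  is_mxderive F dF -> is_mxderive G dG ->
  is_mxderive (fun y => F y *m G y) (dF *m G x + F x *m dG).
Proof.
move=> FdF GdG a b.
have -> : (fun y => (F y *m G y) a b) = (fun y => \sum_c F y a c * G y c b).
  by apply/funext => y; rewrite mxE.
rewrite !mxE -big_split; apply: is_cderive_sum => c /=.
exact: is_cderiveM.
Qed.

Lemma is_mxderive_adj m n (F : V -> 'M[R[i]]_(m, n)) dF :
  is_mxderive F dF -> is_mxderive (fun y => adjmx (F y)) (adjmx dF).
Proof.
move=> FdF a b; rewrite !mxE.
by apply: near_eq_is_cderive (is_cderiveJ (FdF b a)); apply: nearW => y; rewrite !mxE.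
Qed.

Lemma is_mxderiveZ m n (c : V -> R[i]) (F : V -> 'M[R[i]]_(m, n)) dc dF :
  is_cderive x v c dc -> is_mxderive F dF ->
  is_mxderive (fun y => c y *: F y) (dc *: F x + c x *: dF).
Proof.
move=> cdc FdF a b; rewrite !mxE.
by apply: near_eq_is_cderive (is_cderiveM cdc (FdF a b)); apply: nearW => y; rewrite mxE.
Qed.

Lemma is_cderive_cinner n (u w : V -> 'cV[R[i]]_n) du dw :
  is_mxderive u du -> is_mxderive w dw ->
  is_cderive x v (fun y => cinner (u y) (w y)) (cinner du (w x) + cinner (u x) dw).
Proof.
move=> udu wdw; have := is_mxderiveM (is_mxderive_adj udu) wdw 0 0.
rewrite mxE -!cinner_adjmx; apply: near_eq_is_cderive.
by apply: nearW => y; rewrite cinner_adjmx.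
Qed.

Lemma cinner_derive_skew n (u w : V -> 'cV[R[i]]_n) du dw (c : R[i]) :
  is_mxderive u du -> is_mxderive w dw ->
  (\forall y \near x, cinner (u y) (w y) = c) ->
  cinner du (w x) + cinner (u x) dw = 0.
Proof.
move=> udu wdw uwc; apply: cderive_unique (is_cderive_cinner udu wdw) _.
by apply: near_eq_is_cderive (is_cderive_cst _ _ c); apply: filterS uwc.
Qed.

End MatrixDerive.

Lemma mxdifferentiable_is_mxderive (R : realType) (p m n : nat) (k : 'I_p)
    (F : 'rV[R]_p -> 'M[R[i]]_(m, n)) (th : 'rV[R]_p) :
  mxdifferentiable F th -> is_mxderive th (ebase R k) F (mxpartial k F th).
Proof.
move=> Fd a b; have [dRe dIm] := Fd a b; rewrite mxE.
by split; exact/derivableP/diff_derivable.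
Qed.

Section KrausTangent.
Variables (R : realType) (V : normedModType R) (x v : V) (D : nat).
Variables (psi : 'cV[R[i]]_D) (U : V -> 'M[R[i]]_D) (w : V -> 'cV[R[i]]_D).
Variables (p : V -> R) (dU : 'M[R[i]]_D) (dw : 'cV[R[i]]_D).
Hypothesis U_dU : is_mxderive x v U dU.
Hypothesis w_dw : is_mxderive x v w dw.
Hypothesis w_unit : \forall y \near x, cinner (w y) (w y) = 1.
Hypothesis U_psi : \forall y \near x, U y *m psi = (Num.sqrt (p y))%:C *: w y.

Let sqrtp y := Num.sqrt (p y).

Lemma derivable_sqrt_prob : derivable sqrtp x v.
Proof.
have amp : \forall y \near x, complex.Re (cinner (w y) (U y *m psi)) = sqrtp y.
  by apply: filterS2 U_psi w_unit => y -> w1; rewrite cinnerZr w1 mulr1.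
have [amp_d _] := is_cderive_cinner w_dw (is_mxderiveM U_dU (is_mxderive_cst x v psi)).
exact: (near_eq_is_derive amp amp_d).(ex_derive).
Qed.

Lemma mulmx_derive_Kraus : dU *m psi = ('D_v sqrtp x)%:C *: w x + (sqrtp x)%:C *: dw.
Proof.
have sqrtp_d := is_cderive_real (derivableP derivable_sqrt_prob).
rewrite -[dU *m psi]addr0 -(mulmx0 _ (U x)).
apply: mxderive_unique (is_mxderiveM U_dU (is_mxderive_cst x v psi)) _.
by apply: near_eq_is_mxderive (is_mxderiveZ sqrtp_d w_dw); apply: filterS U_psi => y ->.
Qed.

Lemma is_derive_prob :
  (\forall y \near x, 0 <= p y) -> is_derive x v p (2 * sqrtp x * 'D_v sqrtp x).
Proof.
move=> p_ge0; have sqrtp_d := derivableP derivable_sqrt_prob.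
apply: near_eq_is_derive (is_derive_eq (is_deriveM sqrtp_d sqrtp_d) _).
  by apply: filterS p_ge0 => y /sqr_sqrtr; rewrite expr2.
by rewrite /GRing.scale /=; ring.
Qed.

End KrausTangent.

Lemma sum_sym_pairs (T : pzSemiRingType) n (a : 'I_n -> T) (z : 'I_n -> 'I_n -> T) :
  (forall i j, z j i = z i j) ->
  \sum_(i < n) a i * \sum_(j < n) z i j =
  \sum_(i < n) a i * z i i + \sum_(i < n) \sum_(j < n | (i < j)%N) (a i + a j) * z i j.
Proof.
move=> z_sym.
have split_row i : \sum_(j < n) z i j =
    z i i + \sum_(j < n | (i < j)%N) z i j + \sum_(j < n | (j < i)%N) z i j.
  rewrite (bigD1 i) //= (bigID (fun j : 'I_n => (i < j)%N)) /= addrA.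
  congr (_ + _ + _); apply: eq_bigl => j.
    by rewrite andb_idl // => ij; apply: contraTneq ij => ->; rewrite ltnn.
  by rewrite -leqNgt ltn_neqAle -(inj_eq val_inj).
have lower : \sum_(i < n) a i * \sum_(j < n | (j < i)%N) z i j
    = \sum_(i < n) \sum_(j < n | (i < j)%N) a j * z i j.
  under eq_bigr do rewrite mulr_sumr.
  rewrite (exchange_big_dep xpredT) //=; apply: eq_bigr => i _.
  by apply: eq_bigr => j _; rewrite z_sym.
under eq_bigr do rewrite split_row !mulrDr.
rewrite !big_split /= lower -addrA; congr (_ + _).
rewrite -big_split; apply: eq_bigr => i _ /=; rewrite mulr_sumr -big_split.
by apply: eq_bigr => j _; rewrite mulrDl.
Qed.

Lemma fisher_sqrt (R : rcfType) (I : finType) (p a b : I -> R) :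
  (forall i, 0 <= p i) -> (forall i, p i = 0 -> a i = 0) ->
  \sum_(i | 0 < p i) (p i)^-1 * (2 * Num.sqrt (p i) * a i) * (2 * Num.sqrt (p i) * b i)
  = 4 * \sum_i a i * b i.
Proof.
move=> p_ge0 a0; rewrite mulr_sumr [RHS](bigID (fun i => 0 < p i)) /=.
rewrite [X in _ = _ + X]big1 ?addr0 => [|i]; last first.
  rewrite -leNgt => p_le0; have p0 : p i = 0 by apply/eqP; rewrite eq_le p_le0 p_ge0.
  by rewrite a0 // mul0r mulr0.
apply: eq_bigr => i p_gt0; have s_neq0 : Num.sqrt (p i) != 0 by rewrite sqrtr_eq0 -ltNge.
set s := Num.sqrt (p i); rewrite -(sqr_sqrtr (ltW p_gt0)) -/s.
by field.
Qed.

Section FisherDecomposition.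
Variables (R : rcfType) (D : nat) (p : 'I_D -> R) (w : 'I_D -> 'cV[R[i]]_D).
Variables (ak al : 'I_D -> R) (xk xl : 'I_D -> 'cV[R[i]]_D).
Hypothesis p_ge0 : forall i, 0 <= p i.
Hypothesis w_on : forall i j, cinner (w i) (w j) = (i == j)%:R.
Hypothesis xk_skew : forall i j, cinner (xk i) (w j) + cinner (w i) (xk j) = 0.
Hypothesis xl_skew : forall i j, cinner (xl i) (w j) + cinner (w i) (xl j) = 0.

Let Z i j := cinner (xk i) (w j) * cinner (w j) (xl i).

Lemma fisher_kernel_conj i j : Z j i = (Z i j)^*%R.
Proof.
have xk_ji : cinner (xk j) (w i) = - cinner (w j) (xk i).
  by apply/eqP; rewrite -addr_eq0 xk_skew.
have xl_ij : cinner (w i) (xl j) = - cinner (xl i) (w j).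
  by apply/eqP; rewrite -addr_eq0 addrC xl_skew.
by rewrite /Z conjcM !conj_cinner xk_ji xl_ij mulrNN.
Qed.

Lemma Re_cinner_tangents i :
  complex.Re (cinner ((al i)%:C *: w i + (Num.sqrt (p i))%:C *: xl i)
                     ((ak i)%:C *: w i + (Num.sqrt (p i))%:C *: xk i))
  = ak i * al i + p i * \sum_(j < D) complex.Re (Z i j).
Proof.
rewrite Re_cinner_tangent ?sqr_sqrtr ?w_on ?eqxx //; last first.
- by apply: Re_eq0_skew; rewrite conj_cinner addrC xl_skew.
- by apply: Re_eq0_skew; rewrite conj_cinner xk_skew.
rewrite (cinner_parseval _ _ w_on) Re_sum; congr (_ + _ * _); apply: eq_bigr => j _.
by rewrite -[RHS]ReJ /Z conjcM !conj_cinner mulrC.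
Qed.

Lemma fisher_decomposition :
  ((4 : R) * \sum_(i < D) complex.Re
      (cinner ((al i)%:C *: w i + (Num.sqrt (p i))%:C *: xl i)
              ((ak i)%:C *: w i + (Num.sqrt (p i))%:C *: xk i)))%:C
  = ((4 : R) * \sum_(i < D) ak i * al i)%:C
    + ((4 : R) * complex.Re (\sum_(i < D) \sum_(j < D | (i < j)%N)
          (p i + p j)%:C * cinner (xk i) (w j) * cinner (w j) (xl i)))%:C
    + 4%:R * \sum_(i < D | 0 < p i) (p i)%:C * cinner (xk i) (w i) * cinner (w i) (xl i).
Proof.
have diag : (\sum_(i < D) p i * complex.Re (Z i i))%:C
    = \sum_(i < D | 0 < p i) (p i)%:C * cinner (xk i) (w i) * cinner (w i) (xl i).
  rewrite rmorph_sum (bigID (fun i => 0 < p i)) /= [X in _ + X]big1 ?addr0 => [|i].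
    apply: eq_bigr => i _; rewrite rmorphM /= -mulrA; congr (_ * _).
    exact: conjc_fixed_real (esym (fisher_kernel_conj i i)).
  rewrite -leNgt => p_le0; have -> : p i = 0 by apply/eqP; rewrite eq_le p_le0 p_ge0.
  by rewrite mul0r.
have off_diag : \sum_(i < D) \sum_(j < D | (i < j)%N) (p i + p j) * complex.Re (Z i j)
    = complex.Re (\sum_(i < D) \sum_(j < D | (i < j)%N)
          (p i + p j)%:C * cinner (xk i) (w j) * cinner (w j) (xl i)).
  rewrite Re_sum; apply: eq_bigr => i _.
  by rewrite Re_sum; apply: eq_bigr => j _; rewrite -mulrA Re_realM.
rewrite -diag -off_diag -(rmorph_nat (real_complex R)) -rmorphM -!rmorphD; congr (_%:C).
rewrite (eq_bigr _ (fun i _ => Re_cinner_tangents i)) big_split /= sum_sym_pairs; first ring.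
by move=> i j; rewrite fisher_kernel_conj ReJ.
Qed.

End FisherDecomposition.

Theorem proposition3p6 (R : realType) (p D : nat)
  (Theta : set 'rV[R]_p) (Theta_open : open Theta)
  (psi0 : 'cV[R[i]]_D)
  (Ups : 'I_D -> 'rV[R]_p -> 'M[R[i]]_D)
  (pr : 'I_D -> 'rV[R]_p -> R)
  (w : 'I_D -> 'rV[R]_p -> 'cV[R[i]]_D) :
  cinner psi0 psi0 = 1 ->
  (forall i th, Theta th -> mxdifferentiable (Ups i) th) ->
  (forall th, Theta th -> \sum_(i < D) adjmx (Ups i th) *m Ups i th = 1%:M) ->
  (forall j k th, Theta th ->
     \tr (Ups k th *m (psi0 *m adjmx psi0) *m adjmx (Ups j th))
     = ((j == k)%:R * pr k th)%:C) ->
  (forall k th, Theta th -> Ups k th *m psi0 = (Num.sqrt (pr k th))%:C *: w k th) ->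
  (forall j k th, Theta th -> cinner (w j th) (w k th) = (j == k)%:R) ->
  (forall k th, Theta th -> mxdifferentiable (w k) th) ->
  (forall k, (forall th, Theta th -> pr k th = 0) \/
             (forall th, Theta th -> 0 < pr k th)) ->
  forall th, Theta th -> forall k l : 'I_p,
    let rho0 := psi0 *m adjmx psi0 in
    let dU m i := mxpartial m (Ups i) th in
    let dw m i := mxpartial m (w i) th in
    ((4 : R) * \sum_(i < D)
        complex.Re (\tr (dU k i *m rho0 *m adjmx (dU l i))))%:C
    = (\sum_(i < D | 0 < pr i th)
          (pr i th)^-1 * rpartial k (pr i) th * rpartial l (pr i) th)%:C
      + ((4 : R) * complex.Re (\sum_(i < D) \sum_(j < D | (i < j)%N)
          (pr i th + pr j th)%:C
          * cinner (dw k i) (w j th) * cinner (w j th) (dw l i)))%:C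
      + 4%:R * \sum_(i < D | 0 < pr i th)
          (pr i th)%:C * cinner (dw k i) (w i th) * cinner (w i th) (dw l i).
Proof.
move=> _ Ud _ _ Upsi w_on wd pr01 th th_in k l rho0 dU dw.
have near_Theta (P : set 'rV[R]_p) : (forall y, Theta y -> P y) -> \forall y \near th, P y.
  by move=> ThetaP; apply: filterS ThetaP _; exact: Theta_open.
have pr_ge0 i y : Theta y -> 0 <= pr i y.
  by move=> y_in; case: (pr01 i) => /(_ y y_in) => [->|/ltW].
have Uder m i := mxdifferentiable_is_mxderive m (Ud i th th_in).
have wder m i := mxdifferentiable_is_mxderive m (wd i th th_in).
have w_unit i : \forall y \near th, cinner (w i y) (w i y) = 1.
  by apply: near_Theta => y y_in; rewrite w_on // eqxx.
have Upsi_near i := near_Theta _ (Upsi i).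
pose ds m i := 'D_(ebase R m) (fun y => Num.sqrt (pr i y)) th.
have dpr m i : rpartial m (pr i) th = 2 * Num.sqrt (pr i th) * ds m i.
  have pr_ge0_near := near_Theta _ (pr_ge0 i).
  by case: (is_derive_prob (Uder m i) (wder m i) (w_unit i) (Upsi_near i) pr_ge0_near).
have ds0 m i : pr i th = 0 -> ds m i = 0.
  move=> pr0; rewrite /ds (near_eq_derive _ (_ : \forall y \near th, _ = 0)) ?derive_cst //.
  case: (pr01 i) => [pr_eq0 | /(_ th th_in)]; last by rewrite pr0 ltxx.
  by apply: near_Theta => y /pr_eq0 ->; rewrite sqrtr0.
have skew m i j : cinner (dw m i) (w j th) + cinner (w i th) (dw m j) = 0.
  exact: cinner_derive_skew (wder m i) (wder m j) (near_Theta _ (w_on i j)).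
under eq_bigr do
  rewrite mxtrace_rank1 !(mulmx_derive_Kraus (Uder _ _) (wder _ _) (w_unit _) (Upsi_near _)).
rewrite fisher_decomposition; last 4 first.
- by move=> i; exact: pr_ge0.
- by move=> i j; exact: w_on.
- exact: skew.
- exact: skew.
congr (_ + _ + _); congr (_%:C).
rewrite (eq_bigr _ (fun i _ => congr2 (fun a b => _ * a * b) (dpr k i) (dpr l i))).
by rewrite fisher_sqrt // => [i|i]; [exact: pr_ge0 | exact: ds0].
Qed.
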